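(* A set $S\subseteq\mathbb{M}^\Sigma$ is a masked semilinear set if and only if there exists an automaton $\mathcal{A}$ over $\Sigma$ such that $S=\Psi(\mathfrak{J}(\mathcal{A}))$.
   Context: Automata are nondeterministic B\''uchi automata $\langle\Sigma,Q,\delta,Q_0,\alpha\rangle$ over infinite words. For $w\in\Sigma^\omega$, $\Psi(w)\in\mathbb{N}_\infty^\Sigma$ gives for each letter its number of occurrences (or $\infty$ if infinitely many); $w\sim w'$ iff $\Psi(w)=\Psi(w')$; $\mathfrak{J}(\mathcal{A})=\{w\in\Sigma^\omega:\exists w'\sim w,\ w'\in\mathfrak{L}(\mathcal{A})\}$. $\mathbb{M}^\Sigma=\mathbb{N}_\infty^\Sigma\setminus\mathbb{N}^\Sigma$. A mask is $\mathfrak{m}\in\{0,\infty\}^\Sigma\setminus\{\vec 0\}$; $\vec x\oplus\mathfrak{m}$ has coordinate $\vec x(\sigma)$ where $\mathfrak{m}(\sigma)=0$ and $\infty$ elsewhere. A masked semilinear set is $\bigcup_{\mathfrak{m}}\{\vec x\oplus\mathfrak{m}:\vec x\in S_\mathfrak{m}\}$ over all masks, with each $S_\mathfrak{m}\subseteq\mathbb{N}^\Sigma$ semilinear (possibly empty). *)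

From mathcomp Require Import all_boot.
Set Implicit Arguments. Unset Strict Implicit. Unset Printing Implicit Defensive.

(* N_infty := option nat, with None standing for infinity. *)
Definition ninf := option nat.

Section Defs.
Variable Sigma : finType.

Definition oword := nat -> Sigma.

Record buchi := Buchi {
  bstate : finType;
  bdelta : bstate -> Sigma -> bstate -> bool;
  binit : pred bstate;
  bacc : pred bstate }.
Arguments bdelta : clear implicits.
Arguments binit : clear implicits.
Arguments bacc : clear implicits.

Definition accepts (A : buchi) (w : oword) : Prop :=
  exists r : nat -> bstate A,
    binit A (r 0) /\ (forall i, bdelta A (r i) (w i) (r i.+1)) /\
    (forall N, exists2 i, N <= i & bacc A (r i)).

(* Parikh w v  <->  Psi(w) = v : each letter's number of occurrences (None = infinitely many). *)
Definition Parikh (w : oword) (v : {ffun Sigma -> ninf}) : Prop :=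
  forall s : Sigma,
    match v s with
    | None => forall N, exists2 i, N <= i & w i = s
    | Some n => exists N, (forall i, N <= i -> w i <> s) /\
                          count (fun i => w i == s) (iota 0 N) = n
    end.

Definition psi_equiv (w w' : oword) : Prop :=
  forall v, Parikh w v <-> Parikh w' v.

Definition inJ (A : buchi) (w : oword) : Prop :=
  exists w', psi_equiv w' w /\ accepts A w'.

Definition inM (v : {ffun Sigma -> ninf}) : Prop := exists s, v s = None.

Definition linear_set (b : {ffun Sigma -> nat}) (P : seq {ffun Sigma -> nat})
    (x : {ffun Sigma -> nat}) : Prop :=
  exists c : 'I_(size P) -> nat,
    forall s, x s = b s + \sum_(i < size P) c i * (tnth (in_tuple P) i) s.

Definition semilinear (S : {ffun Sigma -> nat} -> Prop) : Prop :=
  exists L : seq ({ffun Sigma -> nat} * seq {ffun Sigma -> nat}),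
    forall x, S x <-> exists2 bP, bP \in L & linear_set bP.1 bP.2 x.

(* masks: m s = true means the coordinate is infinity; mask must be nonzero *)
Definition is_mask (m : {ffun Sigma -> bool}) : Prop := exists s, m s.

Definition mask_add (x : {ffun Sigma -> nat}) (m : {ffun Sigma -> bool})
    : {ffun Sigma -> ninf} :=
  [ffun s => if m s then None else Some (x s)].

Definition masked_semilinear (S : {ffun Sigma -> ninf} -> Prop) : Prop :=
  exists Sm : {ffun Sigma -> bool} -> ({ffun Sigma -> nat} -> Prop),
    (forall m, semilinear (Sm m)) /\
    (forall v, S v <-> exists m, is_mask m /\ exists2 x, Sm m x & v = mask_add x m).

End Defs.

(* Since J(A) is the closure of L(A) under Parikh equivalence, Psi(J(A)) =
   Psi(L(A)) ([inJ_Parikh]), so only accepted words matter.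

   Automaton => masked semilinear: an accepted word splits at a point after
   which only the letters occurring infinitely often appear ([accepts_split],
   [accepts_cat]).  Hence Psi(L(A)) is the union over masks m of the sets of
   Parikh vectors of finite paths from an initial state to a state that starts
   an accepting tail using exactly the letters of m; these path sets are
   semilinear by Parikh's theorem, proved by McNaughton-Yamada induction
   ([semilin_kpath]).

   Masked semilinear => automaton: for every nonzero mask m and linear set
   b + P^* of the presentation of S_m, the automaton [Aut] counts down a
   bounded counter initialised to b, may reload it with a period p in P, and
   once the counter is empty cycles forever through the letters of m
   ([Aut_complete], [Aut_sound]). *)
From mathcomp Require Import all_boot.
From mathcomp Require Import zify.
From Stdlib Require Import Classical.
Set Implicit Arguments. Unset Strict Implicit. Unset Printing Implicit Defensive.

Section Vectors.
Variable Sigma : finType.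
Notation V := {ffun Sigma -> nat}.

Definition v0 : V := [ffun => 0].
Definition vadd (x y : V) : V := [ffun s => x s + y s].
Definition unitv (a : Sigma) : V := [ffun s => nat_of_bool (s == a)].

Lemma vaddA x y z : vadd x (vadd y z) = vadd (vadd x y) z.
Proof. by apply/ffunP=> s; rewrite !ffunE addnA. Qed.
Lemma vaddC x y : vadd x y = vadd y x.
Proof. by apply/ffunP=> s; rewrite !ffunE addnC. Qed.
Lemma vaddCA x y z : vadd x (vadd y z) = vadd y (vadd x z).
Proof. by apply/ffunP=> s; rewrite !ffunE addnCA. Qed.
Lemma vadd0 x : vadd x v0 = x.
Proof. by apply/ffunP=> s; rewrite !ffunE addn0. Qed.
Lemma add0v x : vadd v0 x = x.
Proof. by apply/ffunP=> s; rewrite !ffunE. Qed.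

Lemma sum_vadd x y : \sum_s vadd x y s = \sum_s x s + \sum_s y s.
Proof. by rewrite -big_split; apply: eq_bigr => s _; rewrite ffunE. Qed.
Lemma sum_unitv a : \sum_s unitv a s = 1.
Proof.
rewrite (bigD1 a) //= ffunE eqxx big1 // => s /negbTE.
by rewrite ffunE => ->.
Qed.

End Vectors.

Section Semilinear.
Variable Sigma : finType.
Notation V := {ffun Sigma -> nat}.
Implicit Types (x y b : V) (P : seq V) (A B : V -> Prop).

Inductive span P : V -> Prop :=
| span0 : span P (v0 Sigma)
| spanS p y : p \in P -> span P y -> span P (vadd p y).

Lemma span_add P x y : span P x -> span P y -> span P (vadd x y).
Proof.
elim=> [|p x' pP _ IH] Hy; first by rewrite add0v.
by rewrite -vaddA; apply: spanS (IH Hy).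
Qed.

Lemma span_sub P P' y : {subset P <= P'} -> span P y -> span P' y.
Proof. by move=> sub; elim=> [|p y' /sub pP _]; [exact: span0|exact: spanS]. Qed.

Lemma span_cat P1 P2 y : span (P1 ++ P2) y <->
  exists y1 y2, [/\ span P1 y1, span P2 y2 & y = vadd y1 y2].
Proof.
split.
  elim=> [|p y' + _ [y1 [y2 [H1 H2 ->]]]].
    by exists (v0 _), (v0 _); split; [exact: span0|exact: span0|rewrite vadd0].
  rewrite mem_cat => /orP[] pP.
    by exists (vadd p y1), y2; split; [exact: spanS|done|rewrite vaddA].
  by exists y1, (vadd p y2); split; [done|exact: spanS|rewrite vaddCA].
case=> y1 [y2 [H1 H2 ->]]; apply: span_add.
  by apply: span_sub H1 => z zP; rewrite mem_cat zP.
by apply: span_sub H2 => z zP; rewrite mem_cat zP orbT.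
Qed.

Definition lin b P x := exists2 y, span P y & x = vadd b y.

Lemma span_scale P p k : p \in P -> span P [ffun s => k * p s].
Proof.
move=> pP; elim: k => [|k IH].
  by rewrite (_ : [ffun _ => _] = v0 _); [exact: span0|apply/ffunP=> s; rewrite !ffunE].
rewrite (_ : [ffun _ => _] = vadd p [ffun s => k * p s]); first exact: spanS IH.
by apply/ffunP=> s; rewrite !ffunE mulSn.
Qed.

Lemma linear_setE b P x : linear_set b P x <-> lin b P x.
Proof.
split.
  case=> c Hc; pose p i := tnth (in_tuple P) i.
  exists [ffun s => \sum_(i < size P) c i * p i s]; last first.
    by apply/ffunP=> s; rewrite Hc !ffunE.
  rewrite (_ : [ffun _ => _] = \big[@vadd _/v0 _]_(i < size P) [ffun s => c i * p i s]).
    apply: (big_ind (span P)) => [|y z|i _]; [exact: span0|exact: span_add|].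
    exact/span_scale/mem_tnth.
  apply/ffunP=> s; rewrite ffunE; elim/big_rec2: _ => [|i n y _ ->]; by rewrite !ffunE.
case=> y Hy ->; elim: Hy => [|p y' pP _ [c Hc]].
  by exists (fun _ => 0) => s; rewrite !ffunE big1.
pose i0 : 'I_(size P) := Ordinal (etrans (index_mem p P) pP).
exists (fun i => c i + (i == i0)) => s.
move/eqP: (Hc s); rewrite !ffunE eqn_add2l => /eqP ->; congr (_ + _).
under [RHS]eq_bigr do rewrite mulnDl.
rewrite big_split /= addnC; congr (_ + _).
rewrite (bigD1 i0) //= eqxx mul1n big1 ?addn0; last first.
  by move=> i /negbTE ->.
by rewrite (tnth_nth p) /= nth_index.
Qed.

Definition semilin A := exists L : seq (V * seq V),
  forall x, A x <-> exists2 bP, bP \in L & lin bP.1 bP.2 x.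

Lemma semilinearE A : semilinear A <-> semilin A.
Proof.
by split=> -[L HL]; exists L => x; rewrite HL;
  split=> -[bP bPL /linear_setE H]; exists bP.
Qed.

Lemma semilin_ext A B : (forall x, A x <-> B x) -> semilin A -> semilin B.
Proof. by move=> AB [L HL]; exists L => x; rewrite -AB. Qed.

Lemma semilin_lin b P : semilin (lin b P).
Proof.
exists [:: (b, P)] => x; split=> [H|[bP]]; first by exists (b, P); rewrite ?inE.
by rewrite inE => /eqP ->.
Qed.

Lemma semilin_empty : semilin (fun _ => False).
Proof. by exists [::] => x; split=> // -[]. Qed.

Lemma semilin_single b : semilin (eq^~ b).
Proof.
apply: semilin_ext (semilin_lin b [::]) => x; split=> [[y Hy ->]|->].
  by case: Hy => [|p y'] //; rewrite vadd0.
by exists (v0 _); [exact: span0|rewrite vadd0].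
Qed.

(* restricting by an arbitrary proposition gives the set itself or the empty
   set (classical case split) *)
Lemma semilin_cond (C : Prop) A : semilin A -> semilin (fun x => C /\ A x).
Proof.
case: (classic C) => [c|nc] HA.
  by apply: semilin_ext HA => x; split=> [|[]].
by apply: semilin_ext semilin_empty => x; split=> // -[].
Qed.

Lemma semilin_union A B : semilin A -> semilin B -> semilin (fun x => A x \/ B x).
Proof.
move=> [LA HA] [LB HB]; exists (LA ++ LB) => x; rewrite HA HB; split.
  by case=> -[bP bPL H]; exists bP => //; rewrite mem_cat bPL ?orbT.
by case=> bP; rewrite mem_cat => /orP[] bPL H; [left|right]; exists bP.
Qed.

Lemma semilin_bigcup (T : eqType) (ts : seq T) (F : T -> V -> Prop) :
  (forall t, semilin (F t)) -> semilin (fun x => exists2 t, t \in ts & F t x).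
Proof.
move=> HF; elim: ts => [|t ts IH].
  by apply: semilin_ext semilin_empty => x; split=> // -[].
apply: semilin_ext (semilin_union (HF t) IH) => x; split.
  case=> [H|[t' t'ts H]]; first by exists t; rewrite ?inE ?eqxx.
  by exists t'; rewrite // inE t'ts orbT.
by case=> t'; rewrite inE => /orP[/eqP->|t'ts] H; [left|right; exists t'].
Qed.

Definition msum A B x := exists a b, [/\ A a, B b & x = vadd a b].

Lemma semilin_msum A B : semilin A -> semilin B -> semilin (msum A B).
Proof.
move=> [LA HA] [LB HB].
exists [seq (vadd u.1 w.1, u.2 ++ w.2) | u <- LA, w <- LB] => x; split.
  case=> a [b [/HA [ba baL [ya Hya ->]] /HB [bb bbL [yb Hyb ->]] ->]].
  exists (vadd ba.1 bb.1, ba.2 ++ bb.2); first by apply/allpairsP; exists (ba, bb).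
  exists (vadd ya yb); first by apply/span_cat; exists ya, yb.
  by rewrite /= -!vaddA (vaddCA ya).
case=> bP /allpairsP [[ba bb] [baL bbL ->]] /= [y /span_cat [ya [yb [Hya Hyb ->]]] ->].
exists (vadd ba.1 ya), (vadd bb.1 yb); split.
- by apply/HA; exists ba => //; exists ya.
- by apply/HB; exists bb => //; exists yb.
by rewrite -!vaddA (vaddCA ya).
Qed.

Inductive star A : V -> Prop :=
| star0 : star A (v0 Sigma)
| starS a y : A a -> star A y -> star A (vadd a y).

Lemma star_add A x y : star A x -> star A y -> star A (vadd x y).
Proof.
elim=> [|a x' Aa _ IH] Hy; first by rewrite add0v.
by rewrite -vaddA; apply: starS (IH Hy).
Qed.

Lemma star_sub A B x : (forall a, A a -> B a) -> star A x -> star B x.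
Proof. by move=> AB; elim=> [|a y /AB Ba _]; [exact: star0|exact: starS]. Qed.

Lemma star_ext A B x : (forall a, A a <-> B a) -> (star A x <-> star B x).
Proof. by move=> AB; split; apply: star_sub => a /AB. Qed.

Lemma star1 A a : A a -> star A a.
Proof. by move=> Aa; rewrite -(vadd0 a); apply: starS Aa (star0 _). Qed.

Lemma star_union A B x : star (fun x => A x \/ B x) x <-> msum (star A) (star B) x.
Proof.
split.
  elim=> [|a y + _ [x1 [x2 [H1 H2 ->]]]].
    by exists (v0 _), (v0 _); split; [exact: star0|exact: star0|rewrite vadd0].
  case=> Ha.
    by exists (vadd a x1), x2; split; [exact: starS|done|rewrite vaddA].
  by exists x1, (vadd a x2); split; [done|exact: starS|rewrite vaddCA].
case=> x1 [x2 [H1 H2 ->]]; apply: star_add.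
  by apply: star_sub H1 => a; left.
by apply: star_sub H2 => a; right.
Qed.

Lemma star_lin b P x : star (lin b P) x <-> x = v0 Sigma \/ lin b (b :: P) x.
Proof.
have subP : {subset P <= b :: P} by move=> z zP; rewrite inE zP orbT.
split.
  elim=> [|a y [ya Hya ->] _ [->|[y' Hy' ->]]]; first by left.
    by right; exists ya; [exact: span_sub Hya|rewrite vadd0].
  right; exists (vadd b (vadd ya y')); last by rewrite -!vaddA (vaddCA ya).
  by apply: spanS (span_add (span_sub subP Hya) Hy'); rewrite inE eqxx.
case=> [->|[y Hy ->]]; first exact: star0.
have Hb : lin b P b by exists (v0 _); [exact: span0|rewrite vadd0].
suff H z : span P z -> star (lin b P) (vadd b (vadd y z)).
  by move: (H _ (span0 _)); rewrite vadd0.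
elim: Hy z => [|p y' + Hy' IH] z Hz.
  by apply: star1; exists z; rewrite ?add0v.
rewrite inE => /orP[/eqP->|pP].
  by rewrite -[vadd (vadd b y') z]vaddA; apply: starS Hb (IH z Hz).
by rewrite -[vadd (vadd p y') z]vaddA (vaddCA p); apply/IH/spanS.
Qed.

Lemma semilin_star A : semilin A -> semilin (star A).
Proof.
case=> L HL.
pose UL (M : seq (V * seq V)) x := exists2 bP, bP \in M & lin bP.1 bP.2 x.
apply: (@semilin_ext (star (UL L))) => [x|]; first by apply: star_ext => a; rewrite HL.
elim: L {HL} => [|bP L IH].
  apply: semilin_ext (semilin_single (v0 _)) => x; split=> [->|]; first exact: star0.
  by case=> // a y [].
apply: (semilin_ext (A := msum (star (lin bP.1 bP.2)) (star (UL L)))).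
  move=> x; rewrite -star_union; apply: star_ext => a; split.
    case=> [H|[bP' bPL H]]; first by exists bP; rewrite ?inE ?eqxx.
    by exists bP'; rewrite // inE bPL orbT.
  by case=> bP'; rewrite inE => /orP[/eqP->|bPL] H; [left|right; exists bP'].
apply: semilin_msum IH; apply: semilin_ext (fun x => iff_sym (star_lin _ _ x)) _.
exact: semilin_union (semilin_single _) (semilin_lin _ _).
Qed.

End Semilinear.

(* Parikh's theorem for finite paths, by the McNaughton-Yamada induction on the
   set K of states allowed as intermediate points. *)
Section PathParikh.
Variables (Sigma : finType) (Q : finType) (d : Q -> Sigma -> Q -> bool).
Notation V := {ffun Sigma -> nat}.

(* kpath K i j x: some path from i to j whose intermediate states all lie in K
   reads a word with Parikh vector x *)
Inductive kpath (K : seq Q) : Q -> Q -> V -> Prop :=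
| kpath_nil i : kpath K i i (v0 Sigma)
| kpath_edge i a j : d i a j -> kpath K i j (unitv a)
| kpath_via i k j x y : k \in K -> kpath K i k x -> kpath K k j y -> kpath K i j (vadd x y).

Lemma kpath_sub K K' i j x : {subset K <= K'} -> kpath K i j x -> kpath K' i j x.
Proof.
move=> sub; elim=> {i j x} [i|i a j dij|i k j x y /sub kK _ IH1 _ IH2].
- exact: kpath_nil.
- exact: kpath_edge.
- exact: kpath_via kK IH1 IH2.
Qed.

Section AddState.
Variables (q : Q) (K : seq Q).

Definition via_q i j x := kpath K i j x \/
  msum (msum (kpath K i q) (star (kpath K q q))) (kpath K q j) x.

Lemma via_q_to_q i x : via_q i q x ->
  exists x1 s, [/\ kpath K i q x1, star (kpath K q q) s & x = vadd x1 s].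
Proof.
case=> [H|[z [x2 [[x1 [s [H1 Hs ->]]] H2 ->]]]].
  by exists x, (v0 _); split; [done|exact: star0|rewrite vadd0].
exists x1, (vadd s x2); split; [done| |by rewrite vaddA].
exact: star_add Hs (star1 H2).
Qed.

Lemma via_q_through_q i j x1 s z : kpath K i q x1 -> star (kpath K q q) s ->
  via_q q j z -> via_q i j (vadd (vadd x1 s) z).
Proof.
move=> H1 Hs [Hz|[z' [y2 [[y1 [s' [Hy1 Hs' ->]]] Hy2 ->]]]].
  by right; exists (vadd x1 s), z; split => //; exists x1, s.
right; exists (vadd x1 (vadd s (vadd y1 s'))), y2; split=> //; last by rewrite !vaddA.
exists x1, (vadd s (vadd y1 s')); split=> //.
exact: star_add Hs (starS Hy1 Hs').
Qed.

Lemma via_q_prepend i k j x y : k \in K -> kpath K i k x -> via_q k j y ->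
  via_q i j (vadd x y).
Proof.
move=> kK Hx [Hy|[z' [y2 [[y1 [s' [Hy1 Hs' ->]]] Hy2 ->]]]].
  by left; exact: kpath_via kK Hx Hy.
right; exists (vadd (vadd x y1) s'), y2; split; [|done|by rewrite !vaddA].
by exists (vadd x y1), s'; split; [exact: kpath_via kK Hx Hy1|done|].
Qed.

Lemma kpath_cons i j x : kpath (q :: K) i j x <-> via_q i j x.
Proof.
have sub : {subset K <= q :: K} by move=> z zK; rewrite inE zK orbT.
have qq : q \in q :: K by rewrite inE eqxx.
split.
  elim=> {i j x} [i|i a j dij|i k j x y + _ IH1 _ IH2].
  - by left; exact: kpath_nil.
  - by left; exact: kpath_edge.
  rewrite inE => /orP[/eqP kq|kK]; first subst k.
    by have [x1 [s [H1 Hs ->]]] := via_q_to_q IH1; exact: via_q_through_q.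
  case: IH1 => [H|[z [x2 [[x1 [s [H1 Hs ->]]] H2 ->]]]].
    exact: via_q_prepend kK H IH2.
  by rewrite -vaddA; apply: via_q_through_q => //; exact: via_q_prepend kK H2 IH2.
case=> [H|[z [x2 [[x1 [s [H1 Hs ->]]] H2 ->]]]]; first exact: kpath_sub sub H.
have Hs' : kpath (q :: K) q q s.
  elim: Hs => [|a y Ha _ IH]; first exact: kpath_nil.
  exact: kpath_via qq (kpath_sub sub Ha) IH.
exact: kpath_via qq (kpath_via qq (kpath_sub sub H1) Hs') (kpath_sub sub H2).
Qed.
End AddState.

Lemma kpath_nilE i j x : kpath [::] i j x <->
  (i = j /\ x = v0 Sigma) \/ exists2 a, a \in enum Sigma & d i a j /\ x = unitv a.
Proof.
split; first by case=> [i'|i' a j' dij|] //; [left|right; exists a; rewrite ?mem_enum].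
by case=> [[-> ->]|[a _ [dij ->]]]; [exact: kpath_nil|exact: kpath_edge].
Qed.

Theorem semilin_kpath K i j : semilin (kpath K i j).
Proof.
elim: K i j => [|q K IH] i j.
  apply: semilin_ext (fun x => iff_sym (kpath_nilE i j x)) _.
  apply: semilin_union.
    by apply: semilin_cond; exact: semilin_single.
  by apply: semilin_bigcup => a; apply: semilin_cond; exact: semilin_single.
apply: semilin_ext (fun x => iff_sym (kpath_cons q K i j x)) _.
apply: semilin_union (IH i j) _.
by apply: semilin_msum (IH q j); apply: semilin_msum (IH i q) _; exact: semilin_star.
Qed.

End PathParikh.

Arguments kpath_nil {Sigma Q d K} i.
Arguments kpath_edge {Sigma Q d K i a j}.

Section Words.
Variable Sigma : finType.
Notation V := {ffun Sigma -> nat}.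

Definition cnt (u : nat -> Sigma) n : V :=
  [ffun s => count (fun t => u t == s) (iota 0 n)].

Lemma cnt0 u : cnt u 0 = v0 Sigma.
Proof. by apply/ffunP=> s; rewrite !ffunE. Qed.

Lemma cntS u n : cnt u n.+1 = vadd (cnt u n) (unitv (u n)).
Proof.
apply/ffunP=> s; rewrite !ffunE -addn1 iotaD count_cat /= addn0 eq_sym.
by case: (s == u n).
Qed.

Definition catw (T : Type) n (u z : nat -> T) t := if t < n then u t else z (t - n).

Lemma catw_lt T n (u z : nat -> T) t : t < n -> catw n u z t = u t.
Proof. by rewrite /catw => ->. Qed.

Lemma catw_ge T n (u z : nat -> T) k : catw n u z (n + k) = z k.
Proof. by rewrite /catw ltnNge leq_addr /= addKn. Qed.

Lemma catw_le T n (u z : nat -> T) t : u n = z 0 -> t <= n -> catw n u z t = u t.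
Proof.
rewrite /catw leq_eqVlt => seam /orP[/eqP->|->] //.
by rewrite ltnn subnn seam.
Qed.

Lemma cnt_cat n u z k : cnt (catw n u z) (n + k) = vadd (cnt u n) (cnt z k).
Proof.
apply/ffunP=> s; rewrite !ffunE iotaD count_cat; congr (_ + _).
  by apply: eq_in_count => t; rewrite mem_iota /= add0n => tn; rewrite catw_lt.
rewrite -[n in iota n]addn0 iotaDl count_map.
by apply: eq_count => t /=; rewrite catw_ge.
Qed.

Lemma cnt_stable (w : nat -> Sigma) s a b :
  (forall i, a <= i -> w i <> s) -> a <= b -> cnt w b s = cnt w a s.
Proof.
move=> H /subnKC <-; elim: (b - a) => [|k IH]; first by rewrite addn0.
have Hk : (s == w (a + k)) = false.
  by apply/eqP => E; apply: (H (a + k)); rewrite ?leq_addr.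
by rewrite addnS cntS ffunE IH ffunE ffunE Hk addn0.
Qed.

Lemma Parikh_uniq (w : nat -> Sigma) v1 v2 : Parikh w v1 -> Parikh w v2 -> v1 = v2.
Proof.
move=> H1 H2; apply/ffunP=> s; move: (H1 s) (H2 s).
case: (v1 s) => [n1|]; case: (v2 s) => [n2|] //.
- case=> N1 [HN1 C1] [N2 [HN2 C2]].
  have := cnt_stable HN1 (leq_maxl N1 N2); have := cnt_stable HN2 (leq_maxr N1 N2).
  by rewrite !ffunE C1 C2 => -> ->.
- by case=> N [HN _] /(_ N) [i /HN].
- by move=> H [N [HN _]]; case: (H N) => i /HN.
Qed.

Lemma inf_often_shift (P : nat -> Prop) N :
  (forall M, exists2 i, M <= i & P i) -> forall M, exists2 i, M <= i & P (N + i).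
Proof.
move=> HP M; have [i NMi Pi] := HP (N + M).
by exists (i - N); rewrite ?subnKC //; lia.
Qed.

Lemma Parikh_masked (w : nat -> Sigma) N x (m : {ffun Sigma -> bool}) :
  cnt w N = x -> (forall i, N <= i -> m (w i)) ->
  (forall s, m s -> forall M, exists2 i, M <= i & w i = s) -> Parikh w (mask_add x m).
Proof.
move=> Hx Hm Hinf s; rewrite ffunE; case: ifP => ms; first exact: Hinf.
exists N; split; first by move=> i /Hm + ws; rewrite ws ms.
by rewrite -Hx ffunE.
Qed.

Definition inf_mask (v : {ffun Sigma -> ninf}) : {ffun Sigma -> bool} :=
  [ffun s => v s == None].

Lemma Parikh_settle w v : Parikh w v -> exists N,
  (forall i, N <= i -> inf_mask v (w i)) /\ v = mask_add (cnt w N) (inf_mask v).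
Proof.
move=> Hp.
have /fin_all_exists [f Hf] : forall s, exists N,
    if v s is Some n then (forall i, N <= i -> w i <> s) /\ cnt w N s = n else True.
  move=> s; move: (Hp s); case: (v s) => [n [N [H1 H2]]|_]; last by exists 0.
  by exists N; rewrite ffunE.
exists (\max_s f s); split.
  move=> i Ni; rewrite ffunE; move: (Hf (w i)); case: (v (w i)) => [n [H _]|//].
  by case: (H i) => //; apply: leq_trans Ni; exact: (leq_bigmax (w i)).
apply/ffunP=> s; rewrite 2!ffunE; move: (Hf s); case: (v s) => [n [H1 <-]|] //=.
by rewrite (cnt_stable H1 (leq_bigmax s)).
Qed.

End Words.

Section BuchiRuns.
Variables (Sigma : finType) (A : buchi Sigma).
Notation V := {ffun Sigma -> nat}.
Notation Q := (bstate A).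
Notation d := (@bdelta Sigma A).
Notation init := (@binit Sigma A).
Notation acc := (@bacc Sigma A).

Definition fin_run (i j : Q) (x : V) := exists n (u : nat -> Sigma) (rr : nat -> Q),
  [/\ rr 0 = i, rr n = j, forall t, t < n -> d (rr t) (u t) (rr t.+1) & cnt u n = x].

Definition inf_run (m : {ffun Sigma -> bool}) (p : Q) := exists (z : nat -> Sigma) (rr : nat -> Q),
  [/\ rr 0 = p, forall i, d (rr i) (z i) (rr i.+1),
      forall N, exists2 i, N <= i & acc (rr i),
      forall i, m (z i) & forall s, m s -> forall N, exists2 i, N <= i & z i = s].

Lemma run_cat n1 n2 (u1 u2 : nat -> Sigma) (r1 r2 : nat -> Q) :
  (forall t, t < n1 -> d (r1 t) (u1 t) (r1 t.+1)) -> r1 n1 = r2 0 ->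
  (forall t, t < n2 -> d (r2 t) (u2 t) (r2 t.+1)) ->
  forall t, t < n1 + n2 -> d (catw n1 r1 r2 t) (catw n1 u1 u2 t) (catw n1 r1 r2 t.+1).
Proof.
move=> c1 seam c2 t tn; case: (ltnP t n1) => tn1.
  have tn1' := ltnW tn1.
  by rewrite [catw n1 u1 u2 t]catw_lt // !catw_le //; exact: c1.
move: tn; rewrite -(subnKC tn1) ltn_add2l -addnS !catw_ge; exact: c2.
Qed.

Lemma kpath_fin_run (a0 : Sigma) K i j x : kpath d K i j x -> fin_run i j x.
Proof.
elim=> {i j x} [i|i a j dij|i k j x y _ _ [n1 [u1 [r1 [a1 b1 c1 e1]]]]
                                     _ [n2 [u2 [r2 [a2 b2 c2 e2]]]]].
- by exists 0, (fun _ => a0), (fun _ => i); rewrite cnt0.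
- exists 1, (fun _ => a), (fun t => if t == 0 then i else j).
  by split=> // [[]|]; rewrite // cntS cnt0 add0v.
have seam : r1 n1 = r2 0 by rewrite b1 a2.
exists (n1 + n2), (catw n1 u1 u2), (catw n1 r1 r2); split.
- by rewrite catw_le.
- by rewrite catw_ge.
- exact: run_cat.
- by rewrite cnt_cat e1 e2.
Qed.

Lemma fin_run_kpath i j x : fin_run i j x -> kpath d (enum Q) i j x.
Proof.
case=> n [u [rr [<- <- c <-]]].
elim: n c => [|n IH] c; first by rewrite cnt0; exact: kpath_nil.
rewrite cntS; apply: (kpath_via (k := rr n)); first by rewrite mem_enum.
  by apply: IH => t tn; apply: c; rewrite ltnW.
by apply: kpath_edge; apply: c.
Qed.

Lemma accepts_cat i p K x m : init i -> kpath d K i p x -> inf_run m p ->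
  exists w, accepts A w /\ Parikh w (mask_add x m).
Proof.
move=> Hi HR [z [r2 [a2 c2 acc2 mz zs]]].
have [n [u [r1 [a1 b1 c1 e1]]]] := kpath_fin_run (z 0) HR.
have seam : r1 n = r2 0 by rewrite b1 a2.
exists (catw n u z); split.
  exists (catw n r1 r2); split; [by rewrite catw_le ?a1|split].
  - move=> t; apply: (@run_cat n t.+1 u z r1 r2 c1 seam) => [t' _|]; first exact: c2.
    by rewrite addnS ltnS leq_addl.
  - move=> N; have [k Nk Hk] := acc2 N.
    by exists (n + k); rewrite ?catw_ge // (leq_trans Nk (leq_addl _ _)).
apply: (Parikh_masked (N := n)).
- by move: (cnt_cat n u z 0); rewrite addn0 cnt0 vadd0 e1.
- by move=> t /subnKC <-; rewrite catw_ge.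
move=> s ms N; have [k Nk Hk] := zs s ms N.
by exists (n + k); rewrite ?catw_ge // (leq_trans Nk (leq_addl _ _)).
Qed.

Lemma accepts_split w v : accepts A w -> Parikh w v ->
  exists i p x, [/\ init i, kpath d (enum Q) i p x,
                    inf_run (inf_mask v) p & v = mask_add x (inf_mask v)].
Proof.
case=> rr [r0 [rd racc]] Hp; have [N [tail Hv]] := Parikh_settle Hp.
exists (rr 0), (rr N), (cnt w N); split => //.
  by apply: fin_run_kpath; exists N, w, rr.
exists (fun i => w (N + i)), (fun i => rr (N + i)); split.
- by rewrite addn0.
- by move=> i; rewrite addnS.
- exact: (inf_often_shift (P := fun i => acc (rr i))).
- by move=> i; apply: tail; rewrite leq_addr.
move=> s; rewrite ffunE => /eqP vs; apply: (inf_often_shift (P := fun i => w i = s)).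
by move: (Hp s); rewrite vs.
Qed.

Lemma inJ_Parikh v : (exists w, inJ A w /\ Parikh w v) <-> exists w, accepts A w /\ Parikh w v.
Proof.
split=> [[w [[w' [eqw acc]] Hp]]|[w [acc Hp]]]; first by exists w'; split => //; apply/eqw.
by exists w; split => //; exists w.
Qed.

End BuchiRuns.

Section FromBuchi.
Variables (Sigma : finType) (A : buchi Sigma).
Notation Q := (bstate A).

Definition tail_paths (m : {ffun Sigma -> bool}) (x : {ffun Sigma -> nat}) :=
  exists i p, [/\ @binit Sigma A i, inf_run m p & kpath (@bdelta Sigma A) (enum Q) i p x].

Lemma semilin_tail_paths m : semilin (tail_paths m).
Proof.
pose F (ip : Q * Q) x :=
  (@binit Sigma A ip.1 /\ inf_run m ip.2) /\ kpath (@bdelta Sigma A) (enum Q) ip.1 ip.2 x.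
have HF ip : semilin (F ip) by apply/semilin_cond/semilin_kpath.
apply: semilin_ext (semilin_bigcup (enum [set: Q * Q]) HF) => x.
split=> [[[i p] _ [[Hi Hp] HR]]|[i [p [Hi Hp HR]]]]; first by exists i, p.
by exists (i, p); rewrite ?mem_enum ?inE.
Qed.

Lemma accepted_Parikh_tail_paths v : inM v ->
  (exists w, accepts A w /\ Parikh w v) <->
  exists m, is_mask m /\ exists2 x, tail_paths m x & v = mask_add x m.
Proof.
move=> [s0 vs0]; split.
  case=> w [acc Hp]; have [i [p [x [Hi HR Hinf ->]]]] := accepts_split acc Hp.
  exists (inf_mask v); split; first by exists s0; rewrite ffunE vs0.
  by exists x => //; exists i, p.
case=> m [_ [x [i [p [Hi Hinf HR]]]] ->].
exact: accepts_cat Hi HR Hinf.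
Qed.

End FromBuchi.

Theorem masked_semilinear_of_buchi (Sigma : finType) (S : {ffun Sigma -> ninf} -> Prop)
  (A : buchi Sigma) : (forall v, S v -> inM v) ->
  (forall v, S v <-> exists w, accepts A w /\ Parikh w v) -> masked_semilinear S.
Proof.
move=> HS HA; exists (tail_paths A); split=> [m|v].
  exact/semilinearE/semilin_tail_paths.
split=> [Sv|Hv].
  by have /accepted_Parikh_tail_paths <- := HS _ Sv; apply/HA.
apply/HA/(accepted_Parikh_tail_paths _ _).2 => //.
by case: Hv => m [[s ms] [x _ ->]]; exists s; rewrite ffunE ms.
Qed.

Section Cycles.
Variable T : eqType.

Lemma next_iter_mem (c : seq T) x k : x \in c -> iter k (next c) x \in c.
Proof. by move=> xc; elim: k => //= k IH; rewrite mem_next. Qed.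

Lemma next_nth_mod (y0 : T) c i : uniq (y0 :: c) -> i < size (y0 :: c) ->
  next (y0 :: c) (nth y0 (y0 :: c) i) = nth y0 (y0 :: c) (i.+1 %% size (y0 :: c)).
Proof.
move=> u ic; rewrite next_nth mem_nth // index_uniq //.
move: ic; rewrite /= ltnS leq_eqVlt => /orP[/eqP ->|ic].
  by rewrite modnn nth_default.
by rewrite modn_small.
Qed.

Lemma iter_next_nth (y0 : T) c i k : uniq (y0 :: c) -> i < size (y0 :: c) ->
  iter k (next (y0 :: c)) (nth y0 (y0 :: c) i) = nth y0 (y0 :: c) ((i + k) %% size (y0 :: c)).
Proof.
move=> u ic; elim: k => [|k IH]; first by rewrite addn0 modn_small.
rewrite iterS IH next_nth_mod ?ltn_mod //.
by rewrite -addn1 modnDml addn1 addnS.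
Qed.

Lemma next_iter_all (c : seq T) x y N : uniq c -> x \in c -> y \in c ->
  exists2 k, N <= k & iter k (next c) x = y.
Proof.
case: c => [//|y0 c] u xc yc; set n := size (y0 :: c).
have ix : index x (y0 :: c) < n by rewrite index_mem.
have iy : index y (y0 :: c) < n by rewrite index_mem.
exists (N * n + (index y (y0 :: c) + n - index x (y0 :: c))).
  by apply: leq_trans (leq_addr _ _); apply: leq_pmulr; apply: leq_ltn_trans ix.
rewrite -[X in iter _ _ X](nth_index y0 xc) iter_next_nth //.
have -> : index x (y0 :: c) + (N * n + (index y (y0 :: c) + n - index x (y0 :: c)))
   = N.+1 * n + index y (y0 :: c) by lia.
by rewrite modnMDl modn_small // nth_index.
Qed.

End Cycles.

(* Given, for every mask m, a list
   Lf m of linear sets (b, P), the automaton guesses a configuration j = (m, (b, P))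
   with m nonzero, then counts down a bounded counter initialised to b, optionally
   adding a period of P at each step; when the counter is empty it moves to a
   loop reading the letters of m cyclically forever. *)
Section ToBuchi.
Variable Sigma : finType.
Notation V := {ffun Sigma -> nat}.
Notation mask := {ffun Sigma -> bool}.
Variable Lf : mask -> seq (V * seq V).

Definition Lsets m x := exists2 bP, bP \in Lf m & lin bP.1 bP.2 x.

Definition configs : seq (mask * (V * seq V)) :=
  [seq (m, bP) | m <- enum [pred m : mask | [exists s, m s]], bP <- Lf m].
Local Notation Cf := (seq_sub configs).
Definition cmask (j : Cf) := (val j).1.
Definition cbase (j : Cf) := (val j).2.1.
Definition cperiods (j : Cf) := (val j).2.2.

Lemma cmask_nonzero j : is_mask (cmask j).
Proof.
rewrite /cmask; have /allpairsPdep [m [bP [+ _ ->]]] := valP j.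
by rewrite mem_enum inE => /existsP.
Qed.

Definition vmax (x : V) := \max_s x s.
Definition Bd := \max_(x <- flatten [seq c.2.1 :: c.2.2 | c <- configs]) vmax x.

Lemma cfg_bound (j : Cf) x s : x \in cbase j :: cperiods j -> x s <= Bd.
Proof.
move=> xj; apply: leq_trans (leq_bigmax_seq x _ isT); last first.
  by apply/flattenP; exists (cbase j :: cperiods j) => //; apply: map_f; exact: valP.
exact: (leq_bigmax (F := fun s => x s)).
Qed.

Local Notation Ctr := {ffun Sigma -> 'I_Bd.+1}.
Definition rv (r : Ctr) : V := [ffun s => val (r s)].
Definition tob (x : V) : Ctr := [ffun s => inord (x s)].
Definition z0 : Ctr := tob (v0 Sigma).

Lemma rv_inj : injective rv.
Proof. by move=> r r' /ffunP E; apply/ffunP=> s; apply: val_inj; move: (E s); rewrite !ffunE. Qed.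

Lemma rv_tob (x : V) : (forall s, x s <= Bd) -> rv (tob x) = x.
Proof. by move=> H; apply/ffunP=> s; rewrite !ffunE; apply: inordK; rewrite ltnS. Qed.

Lemma rv_z0 : rv z0 = v0 Sigma.
Proof. by rewrite rv_tob // => s; rewrite ffunE. Qed.

Definition cyc (m : mask) := [seq s <- enum Sigma | m s].

Lemma cyc_uniq m : uniq (cyc m).
Proof. by rewrite filter_uniq // enum_uniq. Qed.

Lemma mem_cyc m s : (s \in cyc m) = m s.
Proof. by rewrite mem_filter mem_enum andbT. Qed.

(* Counting states inl (j, r) and cycling states inr (j, next expected letter).
   Reading a, a counting step subtracts a from the counter, possibly after
   adding a period; the final counting step, from the empty counter, enters the
   cycle of the mask. *)
Local Notation St := ((Cf * Ctr) + (Cf * Sigma))%type.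

Definition cdelta (q : St) (a : Sigma) (q' : St) : bool :=
  match q, q' with
  | inl (j, r), inl (j', r') => (j == j') &&
      ((vadd (rv r') (unitv a) == rv r) ||
       has (fun p => vadd (rv r') (unitv a) == vadd (rv r) p) (cperiods j))
  | inl (j, r), inr (j', t) =>
      [&& j == j', rv r == v0 Sigma, cmask j a & t == next (cyc (cmask j)) a]
  | inr (j, t), inr (j', t') => [&& j == j', a == t & t' == next (cyc (cmask j)) t]
  | inr _, inl _ => false
  end.
Definition cinit (q : St) : bool := if q is inl (j, r) then rv r == cbase j else false.
Definition cacc (q : St) : bool := if q is inr _ then true else false.
Definition Aut : buchi Sigma := @Buchi Sigma St cdelta cinit cacc.

Notation dA := (@bdelta Sigma Aut).
Notation KA := (enum (bstate Aut)).

Lemma mem_KA (q : bstate Aut) : q \in KA.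
Proof. exact: mem_enum. Qed.

Lemma drain j r : kpath dA KA (inl (j, r)) (inl (j, z0)) (rv r).
Proof.
have [n] := ubnP (\sum_s rv r s); elim: n r => // n IH r sum_r.
case: (pickP (fun s => 0 < rv r s)) => [s rs|r0]; last first.
  have -> : r = z0.
    by apply: rv_inj; apply/ffunP=> s; move: (r0 s); rewrite rv_z0 !ffunE /=; case: (val (r s)).
  by rewrite rv_z0; exact: kpath_nil.
pose r' : Ctr := [ffun t => if t == s then inord (rv r s).-1 else r t].
have Hrr : vadd (rv r') (unitv s) = rv r.
  apply/ffunP=> t; rewrite !ffunE; case: eqP => [->|_]; last by rewrite addn0.
  move: rs; rewrite ffunE /= => rs; rewrite inordK ?addn1 ?prednK //.
  exact: ltnW (ltn_ord _).
have step : dA (inl (j, r)) s (inl (j, r')) by rewrite /= eqxx Hrr eqxx.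
have lt_r' : \sum_s rv r' s < n by move: sum_r; rewrite -Hrr sum_vadd sum_unitv addn1.
by rewrite -Hrr vaddC; apply: kpath_via (mem_KA (inl (j, r'))) (kpath_edge step) (IH r' lt_r').
Qed.

Lemma period_loop j p : p \in cperiods j -> kpath dA KA (inl (j, z0)) (inl (j, z0)) p.
Proof.
move=> pP; case: (pickP (fun s => 0 < p s)) => [s ps|p0]; last first.
  have -> : p = v0 Sigma by apply/ffunP=> s; move: (p0 s); rewrite ffunE /=; case: (p s).
  exact: kpath_nil.
pose r' : Ctr := tob [ffun t => p t - (t == s)].
have Hrr : vadd (rv r') (unitv s) = p.
  rewrite rv_tob => [|t]; last first.
    by rewrite ffunE (leq_trans (leq_subr _ _)) // (cfg_bound (j := j)) // inE pP orbT.
  apply/ffunP=> t; rewrite !ffunE; case: eqP => [->|_]; first by rewrite subnK.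
  by rewrite subn0 addn0.
have step : dA (inl (j, z0)) s (inl (j, r')).
  by rewrite /= eqxx /=; apply/orP; right; apply/hasP; exists p; rewrite // rv_z0 add0v Hrr.
by rewrite -Hrr vaddC; apply: kpath_via (mem_KA (inl (j, r'))) (kpath_edge step) (drain _ _).
Qed.

Lemma span_loop j y : span (cperiods j) y -> kpath dA KA (inl (j, z0)) (inl (j, z0)) y.
Proof.
elim=> [|p y' pP _ IH]; first exact: kpath_nil.
exact: kpath_via (mem_KA _) (period_loop pP) IH.
Qed.

Lemma cycle_tail j : inf_run (A := Aut) (cmask j) (inl (j, z0)).
Proof.
have [s0 ms0] := cmask_nonzero j; set c := cyc (cmask j).
have s0c : s0 \in c by rewrite mem_cyc.
exists (fun k => iter k (next c) s0),
  (fun k => if k is _.+1 then inr (j, iter k (next c) s0) else inl (j, z0)).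
split => //.
- by case=> [|i]; rewrite /= !eqxx ?rv_z0 ?eqxx ?ms0.
- by move=> N; exists N.+1.
- by move=> i; rewrite -mem_cyc; apply: next_iter_mem.
- by move=> s ms N; apply: next_iter_all; rewrite ?cyc_uniq ?mem_cyc.
Qed.

(* completeness: empty the base counter, loop through the periods, then cycle *)
Lemma Aut_complete m x : is_mask m -> Lsets m x ->
  exists w, accepts Aut w /\ Parikh w (mask_add x m).
Proof.
case=> s0 ms0 [bP bPL [y Hy ->]].
have inG : (m, bP) \in configs.
  by apply/allpairsPdep; exists m, bP; rewrite mem_enum inE; split => //; apply/existsP; exists s0.
pose j : Cf := SeqSub inG.
have bb : rv (tob bP.1) = bP.1.
  by rewrite rv_tob // => s; apply: (cfg_bound (j := j)); rewrite inE eqxx.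
have path : kpath dA KA (inl (j, tob bP.1)) (inl (j, z0)) (vadd bP.1 y).
  by apply: kpath_via (mem_KA _) _ (span_loop (j := j) Hy); rewrite -{2}bb; exact: drain.
have init : cinit (inl (j, tob bP.1)) by rewrite /= bb eqxx.
exact: (accepts_cat (A := Aut)) init path (cycle_tail j).
Qed.

Lemma counter_phase (w : oword Sigma) (rr : nat -> St) j b0 t :
  rr 0 = inl (j, b0) -> rv b0 = cbase j -> (forall i, dA (rr i) (w i) (rr i.+1)) ->
  (forall u, u <= t -> ~~ cacc (rr u)) ->
  exists r y, [/\ rr t = inl (j, r), span (cperiods j) y &
                  vadd (cnt w t) (rv r) = vadd (cbase j) y].
Proof.
move=> r0 b0j rd; elim: t => [_|t IH noacc].
  by exists b0, (v0 _); split; [|exact: span0|rewrite cnt0 add0v vadd0].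
have [r [y [Et Hy Hc]]] := IH (fun u ut => noacc u (leqW ut)).
move: (rd t) (noacc t.+1 (leqnn _)); rewrite Et.
case: (rr t.+1) => [[j' r']|//] /= /andP[/eqP <- /orP[/eqP H|/hasP[p pP /eqP H]]] _.
  exists r', y; split => //; apply/ffunP=> s.
  by move/ffunP/(_ s): H; move/ffunP/(_ s): Hc; rewrite cntS !ffunE; lia.
exists r', (vadd p y); split => //; first exact: spanS.
by apply/ffunP=> s; move/ffunP/(_ s): H; move/ffunP/(_ s): Hc; rewrite cntS !ffunE; lia.
Qed.

Lemma cycle_phase (w : oword Sigma) (rr : nat -> St) T j t0 :
  (forall i, dA (rr i) (w i) (rr i.+1)) -> rr T = inr (j, t0) ->
  forall k, rr (T + k) = inr (j, iter k (next (cyc (cmask j))) t0) /\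
            w (T + k) = iter k (next (cyc (cmask j))) t0.
Proof.
move=> rd ET; suff H k : rr (T + k) = inr (j, iter k (next (cyc (cmask j))) t0).
  by move=> k; split => //; move: (rd (T + k)); rewrite H -addnS H /= => /and3P[_ /eqP].
elim: k => [|k IH]; first by rewrite addn0.
move: (rd (T + k)); rewrite IH -addnS.
by case: (rr (T + k.+1)) => [//|[j' t']] /= /and3P[/eqP <- _ /eqP ->].
Qed.

(* soundness: an accepting run leaves the counting phase with a prefix count in
   b + P^*, emptied counter and exit letter in m, and then cycles through m *)
Lemma Aut_sound w v : accepts Aut w -> Parikh w v ->
  exists m, is_mask m /\ exists2 x, Lsets m x & v = mask_add x m.
Proof.
case=> rr [r0 [rd racc]] Hp.
have ex : exists t, cacc (rr t) by case: (racc 0) => i _ Hi; exists i.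
case: (ex_minnP ex) => T HT Tmin.
case E0 : (rr 0) r0 => [[j b0]|] //= /eqP b0j.
have T0 : 0 < T by move: HT; case: (posnP T) => // ->; rewrite E0.
have noacc u : u <= T.-1 -> ~~ cacc (rr u).
  by move=> uT; apply/negP => /Tmin; rewrite leqNgt (leq_ltn_trans uT) // ltn_predL.
have [r [y [Et Hy Hc]]] := counter_phase E0 b0j rd noacc.
case ET : (rr T) HT => [//|[j' t0]] _.
move: (rd T.-1); rewrite Et prednK // ET /= => /and4P[/eqP ej /eqP rz ma /eqP ett].
subst j'; set c := cyc (cmask j).
have t0c : t0 \in c by rewrite ett mem_next mem_cyc.
have tail := cycle_phase rd ET.
exists (cmask j); split; first exact: cmask_nonzero.
exists (vadd (cbase j) y).
  exists (val j).2; last by exists y.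
  by rewrite /cmask; have /allpairsPdep [m [bP [_ + ->]]] := valP j.
apply: (Parikh_uniq Hp); apply: (Parikh_masked (N := T.-1)).
- by move: Hc; rewrite rz vadd0.
- move=> i; rewrite leq_eqVlt => /orP[/eqP <-//|]; rewrite prednK // => /subnKC <-.
  by rewrite (tail _).2 -mem_cyc next_iter_mem.
move=> s ms N; have [k Nk Hk] := next_iter_all N (cyc_uniq _) t0c (etrans (mem_cyc _ _) ms).
by exists (T + k); [exact: leq_trans Nk (leq_addl _ _)|rewrite (tail k).2].
Qed.

Lemma Aut_Parikh v : (exists w, accepts Aut w /\ Parikh w v) <->
  exists m, is_mask m /\ exists2 x, Lsets m x & v = mask_add x m.
Proof.
split=> [[w [acc Hp]]|[m [mm [x Hx ->]]]]; first exact: Aut_sound acc Hp.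
exact: Aut_complete mm Hx.
Qed.

End ToBuchi.

Theorem theorem1 (Sigma : finType) (S : {ffun Sigma -> ninf} -> Prop)
  (HS : forall v, S v -> inM v) :
  masked_semilinear S <->
  exists A : buchi Sigma,
    forall v, S v <-> exists w : oword Sigma, inJ A w /\ Parikh w v.
Proof.
split=> [[Sm [Hsl HSm]]|[A HA]]; last first.
  by apply: (masked_semilinear_of_buchi (A := A) HS) => v; rewrite HA; exact: inJ_Parikh.
have /fin_all_exists [Lf HLf] : forall m, exists L : seq (_ * seq _),
    forall x, Sm m x <-> exists2 bP, bP \in L & lin bP.1 bP.2 x.
  by move=> m; apply/semilinearE.
exists (Aut Lf) => v; rewrite inJ_Parikh Aut_Parikh HSm.
by split=> -[m [mm [x /HLf Hx ->]]]; exists m; split => //; exists x => //; apply/HLf.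
Qed.
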